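(* Let $\mu>0$, $q\in[0,1]$, $s>0$ be fixed and for each $N$ consider the Moran model $(P,X)$ with $N$ individuals described in the context. For each $N$ let $A^{(N)}\subset\bar S^{(N)}$, and let $B^{(N)}$ be an event in $\mathscr{F}_1$ such that $\mathbb{P}^p(B^{(N)})\le\varepsilon(N)$ for all $p\in A^{(N)}$, where $\varepsilon(N)\to0$ as $N\to\infty$. Then there is a constant $C_\mu$ depending only on $\mu$ such that, if $N$ is sufficiently large, for every $p\in A^{(N)}$, \[ \mathbb{E}^p\Big[\inf_{t\in[0,1]}\min_{i=1,\dots,N}\big(X_i(t)-X_i(0)\big)\mathbf{1}_{B^{(N)}}\Big]\ge -C_\mu\big(\sqrt{c_2(p)N^3}+N^2\big)\varepsilon(N)^{1/2}. \] In particular, if $N$ is sufficiently large, for every $p\in A^{(N)}$, \[ \mathbb{E}^p\Big[\inf_{t\in[0,1]}\big(k_c(P(t))-k_c(p)\big)\mathbf{1}_{B^{(N)}}\Big]\ge -C_\mu\big(\sqrt{c_2(p)N^3}+N^2\big)\varepsilon(N)^{1/2}. \] Both statements remain true if $(P,X)$ is replaced by the neutral process $(P^{(Y)},Y)$.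
   Context: Moran model with $N$ individuals. Individual $i$ has fitness type $X_i(t)$. $\bar S^{(N)}$ is the set of probability measures on $\mathbb{R}$ consisting of $N$ point masses of weight $1/N$ all located on a common set $l+\mathbb{Z}$ with $l\in\frac1N\mathbb{Z}$. Dynamics: (Mutation) each individual independently at rate $q\mu$ has its type increased by $1$ and at rate $(1-q)\mu$ decreased by $1$. (Selection) for each ordered pair $(i,j)$, at rate $\frac{s}{N}(X_i-X_j)^+$ individual $i$ replaces individual $j$ ($X_j$ set equal to $X_i$). (Resampling) for each ordered pair $(i,j)$, at rate $\frac1N$ individual $i$ replaces individual $j$. The process is driven by independent Poisson processes/random measures for these events; $\mathscr{F}_1$ is the $\sigma$-algebra generated by the driving noise (equivalently the process) up to time $1$. $P(t)=\frac1N\sum_i\delta_{X_i(t)}$; $\mathbb{P}^p,\mathbb{E}^p$ refer to the process started from a configuration with empirical measure $p$. For $p\in\bar S^{(N)}$: $p_k=p(\{k\})$, $p_{[k,\infty)}=\sum_{j\ge k}p_j$, $m(p)=\sum_k kp_k$, $c_2(p)=\sum_k(k-m(p))^2p_k$, and $k_c(p)=\max\{k:\ Np_{[k,\infty)}>\log^2N\}$. The neutral process $(P^{(Y)},Y)$ is defined by the same mutation and resampling mechanisms (same driving noise) but with no selection; $P^{(Y)}$ is its empirical measure. *)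

From HB Require Import structures.
From mathcomp Require Import all_boot all_order all_algebra.
From mathcomp Require Import all_classical all_reals all_analysis.
Set Implicit Arguments. Unset Strict Implicit. Unset Printing Implicit Defensive.
Import Order.TTheory GRing.Theory Num.Theory.
Local Open Scope classical_set_scope.
Local Open Scope ring_scope.

(* Every noise source is a standard Poisson random measure on
   [0,oo) x [0,oo) with intensity dt du (Lebesgue); events are obtained by
   thinning:  a point (t,u) of
   - NUp i    is an up-mutation of i at time t      iff u <= q mu,
   - NDown i  is a down-mutation of i at time t     iff u <= (1-q) mu,
   - NRes i j is a resampling event (i replaces j)  iff u <= 1/N,
   - NSel i j is a selection event (i replaces j)   iff u <= s/N (X_i - X_j)^+
     (X evaluated just before t). *)
Inductive noise (N : nat) :=
| NUp of 'I_N | NDown of 'I_N | NRes of 'I_N & 'I_N | NSel of 'I_N & 'I_N.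

Section Defs.
Variable R : realType.

Definition rect (a b c e : R) : set (R * R) :=
  [set z | a <= z.1 < b /\ c <= z.2 < e].

Definition poisson_pmf (lam : R) (n : nat) : R :=
  expR (- lam) * lam ^+ n / (n`!)%:R.

Definition count_in (S A : set (R * R)) : \bar R := counting (S `&` A).

Definition rect_of (r : R * R * R * R) : set (R * R) :=
  rect r.1.1.1 r.1.1.2 r.1.2 r.2.

Definition good_rect (r : R * R * R * R) : Prop :=
  0 <= r.1.1.1 <= r.1.1.2 /\ 0 <= r.1.2 <= r.2.

Definition area (r : R * R * R * R) : R := (r.1.1.2 - r.1.1.1) * (r.2 - r.1.2).

Definition count_event (d : measure_display) (Om : measurableType d)
    (S : Om -> set (R * R)) (r : R * R * R * R) (c : nat) : set Om :=
  [set w | count_in (S w) (rect_of r) = (c%:R)%:E].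

(* M is a family of independent standard Poisson random measures on the
   quadrant [0,oo)x[0,oo) with Lebesgue intensity dt du: every point lies in
   the quadrant, the count events are measurable, and the joint law of the
   counts on finitely many rectangles (pairwise disjoint when they concern the
   same source) is the product of Poisson laws with parameter the area. *)
Definition indep_std_poisson (d : measure_display) (Om : measurableType d)
    (P : probability Om R) (I : Type) (M : I -> Om -> set (R * R)) : Prop :=
  [/\ (forall k w, M k w `<=` [set z | 0 <= z.1 /\ 0 <= z.2]),
      (forall k r c, good_rect r -> measurable (count_event (M k) r c)) &
      forall (n : nat) (k : 'I_n -> I) (r : 'I_n -> R * R * R * R)
             (c : 'I_n -> nat),
        (forall m, good_rect (r m)) ->
        (forall m1 m2, m1 <> m2 -> k m1 = k m2 ->
           rect_of (r m1) `&` rect_of (r m2) = set0) ->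
        P (\bigcap_(m in [set: 'I_n]) count_event (M (k m)) (r m) (c m))
        = (\prod_(m < n) poisson_pmf (area (r m)) (c m))%:E].

Definition F1 (d : measure_display) (Om : measurableType d) (I : Type)
    (M : I -> Om -> set (R * R)) : set (set Om) :=
  <<s [set E | exists k r c, good_rect r /\ r.1.1.2 <= 1 /\
                E = count_event (M k) r c] >>.

(* Configurations (X_1..X_N) whose empirical measure lies in S^(N):
   all types lie on a common set l + Z with l in (1/N) Z. *)
Definition config_ok (N : nat) (x : 'I_N -> R) : Prop :=
  exists l : R, (exists z : int, N%:R * l = z%:~R) /\
                forall i, exists z : int, x i = l + z%:~R.

(* empirical measure p = 1/N sum_i delta_{x_i}, as a mass function k |-> p_k *)
Definition emp (N : nat) (x : 'I_N -> R) : R -> R :=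
  fun k => #|[set i | x i == k]|%:R / N%:R.

Definition mean_cfg (N : nat) (x : 'I_N -> R) : R :=
  (\sum_(i < N) x i) / N%:R.
Definition c2_cfg (N : nat) (x : 'I_N -> R) : R :=
  (\sum_(i < N) (x i - mean_cfg x) ^+ 2) / N%:R.

Definition kc_cfg (N : nat) (x : 'I_N -> R) : R :=
  sup [set k : R | (exists i (z : int), k = x i + z%:~R) /\
                   (ln (N%:R : R)) ^+ 2 < #|[set i | k <= x i]|%:R].

Definition replacer (N : nat) (sv : R) (M : noise N -> set (R * R))
    (y : 'I_N -> R) (t : R) (i : 'I_N) : option 'I_N :=
  [pick j | `[< (exists u, M (NRes j i) (t, u) /\ u <= N%:R^-1) \/
               (exists u, M (NSel j i) (t, u) /\
                          u <= sv / N%:R * Num.max 0 (y j - y i)) >] ].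

Definition step (N : nat) (mu q sv : R) (M : noise N -> set (R * R))
    (y : 'I_N -> R) (t : R) : 'I_N -> R :=
  fun i =>
    (if replacer sv M y t i is Some j then y j else y i)
    + (if `[< exists u, M (NUp i) (t, u) /\ u <= q * mu >] then 1 else 0)
    - (if `[< exists u, M (NDown i) (t, u) /\ u <= (1 - q) * mu >] then 1 else 0).

(* X : [0,oo) -> R^N is the (cadlag, piecewise constant) path of the Moran
   model with mutation (mu,q), selection sv and resampling, driven by M and
   started from x: X 0 = x, X is right-constant, and at every t > 0 it has a
   constant left value y with X t = step y t. *)
Definition moran_path (N : nat) (mu q sv : R) (M : noise N -> set (R * R))
    (x : 'I_N -> R) (X : R -> 'I_N -> R) : Prop :=
  [/\ X 0 = x,
      (forall t, 0 <= t -> exists2 del, 0 < del &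
          forall r, t <= r < t + del -> X r = X t) &
      (forall t, 0 < t -> exists2 del, 0 < del & exists y,
          (forall r, t - del < r < t -> X r = y) /\ X t = step mu q sv M y t)].

Definition min_disp (N : nat) (X : R -> 'I_N -> R) : R :=
  inf [set inf [set X t i - X 0 i | i in [set: 'I_N]] | t in [set t | 0 <= t <= 1]].

Definition min_kc (N : nat) (X : R -> 'I_N -> R) : R :=
  inf [set kc_cfg (X t) - kc_cfg (X 0) | t in [set t | 0 <= t <= 1]].

End Defs.

From Pilot Require Import Defs.
From HB Require Import structures.
From mathcomp Require Import all_boot all_order all_algebra finmap.
From mathcomp Require Import all_classical all_reals all_analysis.
From mathcomp Require Import measurable_realfun.
From mathcomp Require Import ring lra.
Import Order.TTheory GRing.Theory Num.Theory.
Import HBNNSimple.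
Set Implicit Arguments. Unset Strict Implicit.
Local Open Scope classical_set_scope.
Local Open Scope ring_scope.

(* A type can only decrease through a down-mutation of its own individual,
   since a replacement copies a type that is already present.  Hence, up to
   time 1, every type stays above the initial minimum minus the number
   D = c_1 + ... + c_N of down-mutation points of all individuals in a fixed
   rectangle, and the initial minimum is at least m(p) - sqrt(N c_2(p)); as
   k_c lies between the smallest and the largest type, both infima are at
   least -(2 sqrt(N c_2(p)) + D).  On B the first term costs at most
   2 sqrt(N c_2(p)) eps, and c <= 1/(2 sqrt eps) + sqrt eps c^2 / 2 bounds
   E[D 1_B] by N (1 + E[c_1^2]) sqrt eps / 2, where c_1 is Poisson with a
   mean depending only on mu. *)

Section IntegralBounds.
Variables (d : measure_display) (T : measurableType d) (R : realType).
Variable mu : {measure set T -> \bar R}.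

Lemma ae_le_integral_measurable_ub (f g : T -> \bar R) :
  (forall x, 0 <= f x)%E -> (forall x, 0 <= g x)%E ->
  measurable_fun [set: T] g -> {ae mu, forall x, f x <= g x}%E ->
  (\int[mu]_x f x <= \int[mu]_x g x)%E.
Proof.
move=> f0 g0 mg fg; rewrite (ge0_integralTE mu f0) /=.
apply: ge_ereal_sup => _ [h hf <-].
rewrite -integralT_nnsfun; apply: ae_ge0_le_integral => //.
- by move=> x _; rewrite lee_fin; exact: fun_ge0.
- by apply/(measurable_EFinP setT h); exact: measurable_funPT.
- by apply: filterS fg => x fgx _; exact: le_trans (hf x) fgx.
Qed.

Lemma oppe_integral_funeneg_le (f : T -> \bar R) :
  (- (\int[mu]_x f^\- x) <= \int[mu]_x f x)%E.
Proof.
rewrite [X in (_ <= X)%E]integralE; apply: leeDr.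
by apply: integral_ge0 => x _; exact: funepos_ge0.
Qed.

End IntegralBounds.

Section PoissonLaw.
Variable R : realType.

Lemma nneseries_expR (x : R) : 0 <= x ->
  (\sum_(0 <= n <oo) ((x ^+ n / n`!%:R)%:E) = (expR x)%:E)%E.
Proof.
move=> x0; rewrite expRE -EFin_lim; last first.
  by rewrite /pseries; under eq_fun do rewrite mulrC; exact: is_cvg_series_exp_coeff.
apply/congr_lim/funext => n /=; rewrite /pseries /series /= -sumEFin.
by apply: eq_bigr => i _; rewrite mulrC.
Qed.

Lemma poisson_pmf_ge0 (l : R) n : 0 <= l -> 0 <= Defs.poisson_pmf l n.
Proof. by move=> l0; rewrite /Defs.poisson_pmf !mulr_ge0 ?expR_ge0 ?exprn_ge0. Qed.

Lemma poisson_pmf_nneseries (l : R) : 0 <= l ->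
  (\sum_(0 <= n <oo) (Defs.poisson_pmf l n)%:E = 1)%E.
Proof.
move=> l0; under eq_eseriesr do rewrite /Defs.poisson_pmf -mulrA EFinM.
rewrite nneseriesZl; last by move=> i _; rewrite lee_fin divr_ge0 // exprn_ge0.
by rewrite nneseries_expR // -EFinM expRN mulVf // gt_eqF // expR_gt0.
Qed.

(* n^2 <= 4^n, so the second moment is dominated by the exponential series at 4l *)
Lemma poisson_second_moment_le (l : R) : 0 <= l ->
  (\sum_(0 <= n <oo) (((n ^ 2)%:R * Defs.poisson_pmf l n)%:E) <= (expR (4 * l))%:E)%E.
Proof.
move=> l0; rewrite -nneseries_expR; last by lra.
apply: lee_nneseries => [n _ _|n _]; first by rewrite lee_fin mulr_ge0 ?poisson_pmf_ge0.
have sq_le_pow4 : ((n ^ 2)%:R <= 4 ^+ n :> R).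
  rewrite -natrX ler_nat (_ : 4 = 2 ^ 2)%N // -expnM mulnC expnM leq_exp2r //.
  exact/ltnW/ltn_expl.
have expNl_le1 : expR (- l) <= 1 by rewrite expR_le1; lra.
rewrite lee_fin /Defs.poisson_pmf exprMn -!mulrA mulrCA mulrA.
rewrite ler_wpM2r ?divr_ge0 ?exprn_ge0 //; apply: le_trans sq_le_pow4.
by rewrite ler_piMl ?expR_ge0.
Qed.

End PoissonLaw.

Section PiecewiseConstantPaths.
Variable R : realType.

Definition count_upto (L : seq (R * R)) (t : R) : nat :=
  count (fun z : R * R => z.1 <= t) L.

Lemma count_upto_le (L : seq (R * R)) r t : r <= t ->
  (count_upto L r <= count_upto L t)%N.
Proof. by move=> rt; apply: sub_count => z /= /le_trans; apply. Qed.

Lemma count_upto_lt (L : seq (R * R)) r t u : r < t -> (t, u) \in L ->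
  (count_upto L r < count_upto L t)%N.
Proof.
move=> rt; elim: L => //= z L IH; rewrite in_cons => /orP[/eqP <-|tL] /=.
  by rewrite lexx (lt_geF rt) add1n ltnS; exact: count_upto_le (ltW rt).
rewrite -addnS leq_add ?IH //.
by case: leP => //= zr; rewrite (le_trans zr (ltW rt)).
Qed.

Definition total_count_upto N (L : 'I_N -> seq (R * R)) (t : R) : nat :=
  (\sum_(i < N) count_upto (L i) t)%N.

Lemma total_count_upto_le N (L : 'I_N -> seq (R * R)) r t : r <= t ->
  (total_count_upto L r <= total_count_upto L t)%N.
Proof. by move=> rt; apply: leq_sum => i _; exact: count_upto_le. Qed.

Lemma total_count_upto_lt N (L : 'I_N -> seq (R * R)) r t u i :
  r < t -> (t, u) \in L i -> (total_count_upto L r < total_count_upto L t)%N.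
Proof.
move=> rt tL; rewrite /total_count_upto (bigD1 i) //= [X in (_ < X)%N](bigD1 i) //=.
rewrite -addSn leq_add //; first exact: count_upto_lt tL.
by apply: leq_sum => j _; apply/count_upto_le/ltW.
Qed.

Lemma inf_mem_of_right_stable (S : set R) :
  S `<=` [set t | 0 <= t] -> S !=set0 ->
  (forall t, 0 <= t -> ~ S t ->
     exists2 del, 0 < del & forall r, t <= r < t + del -> ~ S r) ->
  S (inf S).
Proof.
move=> S0 Sne Sstable; have Sinf : has_inf S by split => //; exists 0.
have inf0 : 0 <= inf S by exact: lb_le_inf.
apply/not_notP => nS; have [del del0 Hdel] := Sstable _ inf0 nS.
have [s Ss slt] := inf_adherent del0 Sinf.
by apply: (Hdel s _ Ss); rewrite slt andbT (ge_inf Sinf.2 Ss).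
Qed.

End PiecewiseConstantPaths.

Section MoranPathLowerBound.
Variables (R : realType) (N : nat) (mu q sv : R) (M : noise N -> set (R * R)).

Let down_jump i t : R :=
  if `[< exists u, M (NDown i) (t, u) /\ u <= (1 - q) * mu >] then 1 else 0.

Lemma step_ge (y : 'I_N -> R) t i m :
  (forall j, m <= y j) -> m - down_jump i t <= step mu q sv M y t i.
Proof.
move=> ym; rewrite /step /down_jump.
have : m <= (if replacer sv M y t i is Some j then y j else y i).
  by case: (replacer sv M y t i).
by case: (replacer sv M y t i) => [j|] ?; do 2!case: ifP => _; lra.
Qed.

Variables (x : 'I_N -> R) (X : R -> 'I_N -> R) (L : 'I_N -> seq (R * R)).
Hypothesis X_path : moran_path mu q sv M x X.
Hypothesis L_down : forall i t u, 0 < t <= 1 -> M (NDown i) (t, u) ->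
  u <= (1 - q) * mu -> (t, u) \in L i.

Let below m t := exists j, X t j < m - (total_count_upto L t)%:R.

Lemma below_right_stable m t : 0 <= t -> ~ below m t ->
  exists2 del, 0 < del & forall r, t <= r < t + del -> ~ below m r.
Proof.
move=> t0 nb; have [_ Xr _] := X_path; have [del del0 Hdel] := Xr t t0.
exists del => // r /andP[tr rt] [j Hj]; apply: nb; exists j.
rewrite (Hdel r) ?tr // in Hj.
by have := total_count_upto_le L tr; rewrite -(ler_nat R); lra.
Qed.

(* Just before a time tau at which some type is below m minus the number of
   down-mutations so far, the path was already so: the jump at tau is at
   most a single down-mutation, and that one is counted. *)
Lemma below_left m tau : 0 < tau <= 1 -> below m tau ->
  exists r, 0 <= r < tau /\ below m r.
Proof.
move=> tau01 [j Hj]; have [_ _ Xl] := X_path; have [tau0 _] := andP tau01.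
have [del del0 [y [Hy Xtau]]] := Xl tau tau0.
pose r := Num.max (tau - del / 2) (tau / 2).
have rlt : r < tau by rewrite /r gt_max; apply/andP; split; lra.
have r0 : 0 <= r by rewrite /r le_max; apply/orP; right; lra.
have Xry : X r = y by apply: Hy; rewrite rlt andbT /r lt_max; apply/orP; left; lra.
exists r; rewrite r0 rlt; split => //; apply/not_existsP => yb; move: Hj.
have {}yb j' : m - (total_count_upto L r)%:R <= y j' by rewrite -Xry leNgt; exact/negP.
have := step_ge tau j yb; rewrite -Xtau /down_jump.
case: asboolP => [[u [Mu uq]]|_].
  have := total_count_upto_lt rlt (L_down tau01 Mu uq).
  by rewrite -(ler_nat R) -natr1 => ? ?; lra.
by have := total_count_upto_le L (ltW rlt); rewrite -(ler_nat R) => ? ?; lra.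
Qed.

Lemma moran_path_ge m : (forall i, m <= x i) ->
  forall t, 0 <= t <= 1 -> forall i, m - (total_count_upto L t)%:R <= X t i.
Proof.
move=> xm t t01 i; rewrite leNgt; apply/negP => Hbad.
pose Bad := [set s : R | 0 <= s <= 1 /\ below m s].
have Bad_stable s : 0 <= s -> ~ Bad s ->
    exists2 del, 0 < del & forall r, s <= r < s + del -> ~ Bad r.
  move=> s0 nBs; have [s1|s1] := leP s 1.
    have [|del del0 Hdel] := @below_right_stable m s s0.
      by move=> bs; apply: nBs; split; first rewrite s0 s1.
    by exists del => // r sr [_]; exact: Hdel.
  by exists 1 => // r /andP[sr _] [/andP[_ r1]]; lra.
have Bad0 : Bad `<=` [set s | 0 <= s] by move=> s [/andP[]].
have Bad_lb : has_lbound Bad by exists 0.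
have Bad_tau : Bad (inf Bad).
  apply: inf_mem_of_right_stable Bad0 _ Bad_stable.
  by exists t; split => //; exists i.
have [/andP[_ tau1] btau] := Bad_tau.
have tau0 : 0 < inf Bad.
  rewrite lt_neqAle (Bad0 _ Bad_tau) andbT; apply/eqP => tau0.
  have [X0 _ _] := X_path; case: btau => j; rewrite -tau0 X0.
  by have := xm j; have : 0 <= (total_count_upto L 0)%:R :> R by []; lra.
have [r [/andP[r0 rlt] br]] := below_left (introT andP (conj tau0 tau1)) btau.
have : inf Bad <= r.
  by apply: ge_inf Bad_lb _ _; split; first rewrite r0 (ltW (lt_le_trans rlt tau1)).
lra.
Qed.

End MoranPathLowerBound.

Lemma count_in_finite (R : realType) (S A : set (R * R)) (c : nat) :
  count_in S A = (c%:R)%:E -> finite_set (S `&` A) /\ #|` fset_set (S `&` A)| = c.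
Proof.
rewrite /count_in /counting; case: asboolP => // fin [] /eqP.
by rewrite eqr_nat => /eqP.
Qed.

Section PoissonRandomMeasures.
Variables (R : realType) (d : measure_display) (Om : measurableType d).
Variables (P : probability Om R) (I : Type) (M : I -> Om -> set (R * R)).
Hypothesis hM : indep_std_poisson P M.

Lemma measurable_count_event k r c : good_rect r ->
  measurable (count_event (M k) r c).
Proof. by case: hM => _ h _; exact: h. Qed.

Lemma F1_measurable E : F1 M E -> measurable E.
Proof.
apply: (smallest_sub (sigma_algebra_measurable _)).
by move=> _ [k [r [c [gr [_ ->]]]]]; exact: measurable_count_event.
Qed.

Lemma count_event_prob k r c : good_rect r ->
  P (count_event (M k) r c) = (Defs.poisson_pmf (area r) c)%:E.
Proof.
case: hM => _ _ hlaw gr.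
have := hlaw 1%N (fun=> k) (fun=> r) (fun=> c) (fun=> gr).
rewrite big_ord1 => <-; last by move=> m1 m2; rewrite [m1]ord1 [m2]ord1.
by congr (P _); apply/seteqP; split => w /=; [move=> h m _ | move/(_ ord0 Logic.I)].
Qed.

Lemma area_ge0 (r : R * R * R * R) : good_rect r -> 0 <= area r.
Proof. by case=> /andP[? ?] /andP[? ?]; rewrite /area mulr_ge0 // subr_ge0. Qed.

Lemma count_in_finite_ae k r : good_rect r ->
  {ae P, forall w, exists c : nat, count_in (M k w) (rect_of r) = (c%:R)%:E}.
Proof.
move=> gr; pose U := \bigcup_c count_event (M k) r c.
have mU : measurable U by apply: bigcupT_measurable => c; exact: measurable_count_event.
exists (~` U); split; first exact: measurableC.
  rewrite probability_setC // measure_bigcup; last 2 first.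
  - by move=> c _; exact: measurable_count_event.
  - move=> i j _ _ [w [/= hi hj]].
    have /eqP : (i%:R : R) = j%:R by apply: EFin_inj; rewrite -hi -hj.
    by rewrite eqr_nat => /eqP.
  rewrite (@eq_eseriesr _ _ (fun c => (Defs.poisson_pmf (area r) c)%:E)); last first.
    by move=> c _; exact: count_event_prob.
  rewrite (_ : (\sum_(0 <= i <oo | i \in [set: nat]) _)%E = 1%E) ?subee //.
  rewrite -(poisson_pmf_nneseries (area_ge0 gr)).
  by apply: congr_lim; apply/funext => n; apply: eq_bigl => i; rewrite in_setT.
by move=> w /= nw [c _ hc]; apply: nw; exists c.
Qed.

Lemma counts_finite_ae N (k : 'I_N -> I) r : good_rect r ->
  {ae P, forall w, exists cs : 'I_N -> nat,
     forall i, count_in (M (k i) w) (rect_of r) = ((cs i)%:R)%:E}.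
Proof.
move=> gr; have : {ae P, forall w (i : 'I_N),
    exists c : nat, count_in (M (k i) w) (rect_of r) = (c%:R)%:E}.
  by apply: filter_forall => i; exact: count_in_finite_ae.
by apply: filterS => w /choice [cs hcs]; exists cs.
Qed.

Definition sq_count k r (w : Om) : \bar R :=
  (\sum_(0 <= c <oo) ((c ^ 2)%:R * \1_(count_event (M k) r c) w)%:E)%E.

Lemma sq_count_ge0 k r w : (0 <= sq_count k r w)%E.
Proof. by apply: nneseries_ge0 => c _ _; rewrite lee_fin mulr_ge0. Qed.

Lemma sq_count_ge k r w c : count_in (M k w) (rect_of r) = (c%:R)%:E ->
  (((c ^ 2)%:R)%:E <= sq_count k r w)%E.
Proof.
move=> hc; apply: le_trans (nneseries_lim_ge c.+1 _); last first.
  by move=> n _; rewrite lee_fin mulr_ge0.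
rewrite big_nat_recr //= indicE mem_set // mulr1 leeDr //.
by apply: sume_ge0 => n _; rewrite lee_fin mulr_ge0.
Qed.

Lemma measurable_sq_count k r : good_rect r -> measurable_fun setT (sq_count k r).
Proof.
move=> gr; have -> : sq_count k r = fun w =>
    (\sum_(0 <= c <oo | c \in [set: nat])
      ((c ^ 2)%:R * \1_(count_event (M k) r c) w)%:E)%E.
  apply/funext => w; apply: congr_lim; apply/funext => n.
  by apply: eq_bigl => c; rewrite in_setT.
apply: ge0_emeasurable_sum => [c w _|c _]; first by rewrite lee_fin mulr_ge0.
apply/measurable_EFinP/measurable_funM => //.
exact/measurable_indic/measurable_count_event.
Qed.

Lemma integral_sq_count k r : good_rect r ->
  (\int[P]_w sq_count k r w =
   \sum_(0 <= c <oo) (((c ^ 2)%:R * Defs.poisson_pmf (area r) c)%:E))%E.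
Proof.
move=> gr; rewrite integral_nneseries //; last first.
  by move=> c; exact/measurable_EFinP/measurable_funM/measurable_indic/measurable_count_event.
apply: eq_eseriesr => c _; under eq_integral do rewrite EFinM.
rewrite ge0_integralZl_EFin //; last first.
  exact/measurable_EFinP/measurable_indic/measurable_count_event.
rewrite integral_indic ?setIT //; last exact: measurable_count_event.
by rewrite EFinM; congr (_ * _)%E; exact: count_event_prob.
Qed.

End PoissonRandomMeasures.

(* c <= 1/(2t) + t c^2/2 is (t c - 1)^2 >= 0 divided by 2t *)
Lemma sum_le_amgm (R : realFieldType) N (a : 'I_N -> R) (t : R) : 0 < t ->
  \sum_(i < N) a i <= N%:R / (2 * t) + \sum_(i < N) (t / 2 * a i ^+ 2).
Proof.
move=> t0; have -> : N%:R / (2 * t) = \sum_(i < N) (1 / (2 * t)).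
  by rewrite big_const_ord iter_addr addr0 -[RHS]mulr_natr mulrC div1r.
rewrite -big_split /=; apply: ler_sum => i _; rewrite -subr_ge0.
have -> : 1 / (2 * t) + t / 2 * a i ^+ 2 - a i = (t * a i - 1) ^+ 2 / (2 * t).
  by field; rewrite gt_eqF.
by rewrite divr_ge0 ?sqr_ge0 // mulr_ge0 // ltW.
Qed.

Section IndicatorIntegralBound.
Variables (R : realType) (d : measure_display) (Om : measurableType d).
Variables (P : probability Om R) (I : Type) (M : I -> Om -> set (R * R)).
Hypothesis hM : indep_std_poisson P M.
Variables (N : nat) (k : 'I_N -> I) (r : R * R * R * R) (K : R).
Hypothesis gr : good_rect r.
Hypothesis hK :
  (\sum_(0 <= n <oo) (((n ^ 2)%:R * Defs.poisson_pmf (area r) n)%:E) <= K%:E)%E.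
Variables (B : set Om) (eps : R).
Hypotheses (mB : measurable B) (PB : (P B <= eps%:E)%E).

Let majorant (a t : R) (w : Om) : \bar R :=
  ((a * \1_B w)%:E + \sum_(i < N) ((t / 2)%:E * sq_count M (k i) r w))%E.

Lemma majorant_ge0 a t w : 0 <= a -> 0 < t -> (0 <= majorant a t w)%E.
Proof.
move=> a0 t0; rewrite adde_ge0 ?lee_fin ?mulr_ge0 // sume_ge0 // => i _.
by rewrite mule_ge0 ?sq_count_ge0 // lee_fin divr_ge0 // ltW.
Qed.

Lemma measurable_majorant a t : measurable_fun setT (majorant a t).
Proof.
apply: emeasurable_funD.
  by apply/measurable_EFinP/measurable_funM => //; exact: measurable_indic.
by apply: emeasurable_sum => i; apply: emeasurable_funM => //; apply: (measurable_sq_count hM).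
Qed.

Lemma integral_majorant_le a t : 0 <= a -> 0 < t ->
  (\int[P]_w majorant a t w <= (a * eps + N%:R * (t / 2 * K))%:E)%E.
Proof.
move=> a0 t0; have t20 : (0 <= (t / 2)%:E)%E by rewrite lee_fin divr_ge0 // ltW.
rewrite ge0_integralD //; first last.
- by apply: emeasurable_sum => i; apply: emeasurable_funM => //; apply: (measurable_sq_count hM).
- by move=> w _; apply: sume_ge0 => i _; rewrite mule_ge0 ?sq_count_ge0.
- by apply/measurable_EFinP/measurable_funM => //; exact: measurable_indic.
- by move=> w _; rewrite lee_fin mulr_ge0.
rewrite ge0_integral_sum //; first last.
- by move=> i w _; rewrite mule_ge0 ?sq_count_ge0.
- by move=> i; apply: emeasurable_funM => //; apply: (measurable_sq_count hM).
under eq_integral do rewrite EFinM.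
rewrite ge0_integralZl_EFin //; last exact/measurable_EFinP/measurable_indic.
rewrite integral_indic ?setIT // EFinD; apply: leeD.
  by rewrite EFinM; apply: lee_wpmul2l; rewrite ?lee_fin.
have -> : N%:R * (t / 2 * K) = \sum_(i < N) (t / 2 * K).
  by rewrite sumr_const card_ord mulr_natl.
rewrite -sumEFin.
apply: lee_sum => i _; rewrite ge0_integralZl_EFin //; first last.
- exact: (measurable_sq_count hM).
- by move=> w _; exact: sq_count_ge0.
by rewrite (integral_sq_count hM) // [X in (_ <= X)%E]EFinM lee_wpmul2l.
Qed.

Lemma integral_mul_indic_ge (Phi : Om -> R) (S : R) : 0 <= S ->
  {ae P, forall w, exists cs : 'I_N -> nat,
     (forall i, count_in (M (k i) w) (rect_of r) = ((cs i)%:R)%:E) /\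
     - (S + \sum_(i < N) (cs i)%:R) <= Phi w} ->
  ((- (S * eps + N%:R * (1 + K) / 2 * Num.sqrt eps))%:E
    <= \int[P]_w ((Phi w * \1_B w)%:E))%E.
Proof.
move=> S0 hPhi; apply: le_trans (oppe_integral_funeneg_le _ _); rewrite EFinN leeN2.
have eps0 : 0 <= eps by rewrite -lee_fin; apply: le_trans PB; exact: measure_ge0.
have [eps_eq0|eps_neq0] := eqVneq eps 0.
  have PB0 : P B = 0%E.
    by apply/eqP; rewrite eq_le measure_ge0 andbT; move: PB; rewrite eps_eq0.
  rewrite eps_eq0 sqrtr0 !mulr0 addr0.
  apply: (@le_trans _ _ (\int[P]_w (cst 0%E w))%E); last by rewrite integral0.
  apply: ae_le_integral_measurable_ub => //.
  exists B; split => // w /= hw; apply: contrapT => Bw; apply: hw.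
  by rewrite funenegE indicE memNset // mulr0 oppe0 maxxx.
have t0 : 0 < Num.sqrt eps by rewrite sqrtr_gt0 lt_neqAle eq_sym eps_neq0.
set t := Num.sqrt eps in t0 *.
pose a := S + N%:R / (2 * t).
have a0 : 0 <= a by rewrite addr_ge0 // divr_ge0 // mulr_ge0 // ltW.
have -> : S * eps + N%:R * (1 + K) / 2 * t = a * eps + N%:R * (t / 2 * K).
  by rewrite -(sqr_sqrtr eps0) -/t /a; field; rewrite gt_eqF.
apply: le_trans (integral_majorant_le a0 t0).
apply: ae_le_integral_measurable_ub => [w|w||]; first exact: funeneg_ge0.
- exact: majorant_ge0.
- exact: measurable_majorant.
apply: filterS hPhi => w [cs [hcs hphi]].
rewrite funenegE indicE; case: (boolP (w \in B)) => wB; last first.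
  by rewrite mulr0 oppe0 maxxx majorant_ge0.
rewrite mulr1 ge_max majorant_ge0 // andbT /majorant indicE wB mulr1.
apply: (@le_trans _ _ ((a + \sum_(i < N) (t / 2 * (cs i)%:R ^+ 2))%:E)).
  by rewrite -EFinN lee_fin /a; have /= := sum_le_amgm (fun i => (cs i)%:R) t0; lra.
rewrite EFinD leeD2l // -sumEFin; apply: lee_sum => i _.
by rewrite EFinM -natrX lee_wpmul2l ?sq_count_ge // lee_fin divr_ge0 // ltW.
Qed.

End IndicatorIntegralBound.

Section TypeFunctionals.
Variable R : realType.

Lemma min_disp_ge N (X : R -> 'I_N -> R) (V : R) : (0 < N)%N ->
  (forall t, 0 <= t <= 1 -> forall i, - V <= X t i - X 0 i) -> - V <= min_disp X.
Proof.
move=> N0 H; apply: lb_le_inf => [|_ [t t01 <-]].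
  by exists (inf [set X 0 i - X 0 i | i in [set: 'I_N]]); exists 0; rewrite /= ?lexx ?ler01.
apply: lb_le_inf => [|_ [i _ <-]]; last exact: H.
by exists (X t (Ordinal N0) - X 0 (Ordinal N0)); exists (Ordinal N0).
Qed.

Lemma min_kc_ge N (X : R -> 'I_N -> R) (V : R) :
  (forall t, 0 <= t <= 1 -> - V <= kc_cfg (X t) - kc_cfg (X 0)) -> - V <= min_kc X.
Proof.
move=> H; apply: lb_le_inf => [|_ [t t01 <-]]; last exact: H.
by exists (kc_cfg (X 0) - kc_cfg (X 0)); exists 0; rewrite /= ?lexx ?ler01.
Qed.

Let kc_set N (y : 'I_N -> R) := [set k : R | (exists i (z : int), k = y i + z%:~R) /\
  (ln (N%:R : R)) ^+ 2 < #|[set i | k <= y i]|%:R].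

Lemma kc_set_ub N (y : 'I_N -> R) k : kc_set y k -> exists i, k <= y i.
Proof.
move=> [_ h]; have : (0 < #|[set i | (k <= y i)%R]|)%N.
  by rewrite lt0n; apply/eqP => h0; move: h; rewrite h0 ltNge sqr_ge0.
by case/card_gt0P => i; rewrite inE => hi; exists i.
Qed.

Lemma kc_set_argmin N (y : 'I_N -> R) : (0 < N)%N -> ln (N%:R : R) ^+ 2 < N%:R ->
  exists2 i0, kc_set y (y i0) & forall i, y i0 <= y i.
Proof.
move=> N0 hN; have [i0 _ hmin] := @arg_minP _ _ _ (Ordinal N0) xpredT y isT.
exists i0 => [|i]; last exact: hmin.
split; first by exists i0, 0; rewrite addr0.
rewrite (_ : #|_| = N) // -[RHS]card_ord; apply: eq_card => i.
by rewrite [RHS]inE mem_set //= hmin.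
Qed.

Lemma kc_cfg_ge N (y : 'I_N -> R) m : (0 < N)%N -> ln (N%:R : R) ^+ 2 < N%:R ->
  (forall i, m <= y i) -> m <= kc_cfg y.
Proof.
move=> N0 hN hm; have [i0 kci0 _] := kc_set_argmin y N0 hN.
apply: le_trans (hm i0) (ub_le_sup _ kci0); exists (\sum_i `|y i|).
move=> k /kc_set_ub [i hi]; apply: le_trans hi (le_trans (ler_norm _) _).
by rewrite (bigD1 i) //= lerDl sumr_ge0.
Qed.

Lemma kc_cfg_le N (y : 'I_N -> R) m : (0 < N)%N -> ln (N%:R : R) ^+ 2 < N%:R ->
  (forall i, y i <= m) -> kc_cfg y <= m.
Proof.
move=> N0 hN hm; have [i0 kci0 _] := kc_set_argmin y N0 hN.
apply: ge_sup; first by exists (y i0).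
by move=> k /kc_set_ub [i hi]; exact: le_trans hi (hm i).
Qed.

End TypeFunctionals.

(* ln N < sqrt N for N >= 64, since exp y >= y^3/6 > y^2 for y = sqrt N >= 8 *)
Lemma ln_sqr_lt_nat (R : realType) (N : nat) : (64 <= N)%N -> ln (N%:R : R) ^+ 2 < N%:R.
Proof.
move=> N64; have N64r : 64 <= N%:R :> R by rewrite ler_nat.
set y := Num.sqrt (N%:R : R).
have yy : y ^+ 2 = N%:R by rewrite sqr_sqrtr.
have y0 : 0 <= y by exact: sqrtr_ge0.
have y8 : 8 <= y by nra.
have : 1 + y ^+ 3 / 3`!%:R <= expR y by exact: expR_ge1Dxn.
rewrite (_ : 3`!%:R = 6 :> R) // => ey.
have hl : ln (N%:R : R) < y by rewrite -[X in _ < X]expRK ltr_ln ?posrE ?expR_gt0; nra.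
have hl0 : 0 <= ln (N%:R : R) by apply: ln_ge0; lra.
nra.
Qed.

Lemma dist_le_sqrt_sum_sqr (R : rcfType) N (x : 'I_N -> R) m i :
  `|x i - m| <= Num.sqrt (\sum_(j < N) (x j - m) ^+ 2).
Proof.
rewrite -sqrtr_sqr ler_sqrt ?sumr_ge0 // => [|j _]; last exact: sqr_ge0.
by rewrite (bigD1 i) //= lerDl sumr_ge0 // => j _; exact: sqr_ge0.
Qed.

Section MoranDisplacement.
Variables (R : realType) (N : nat) (mu q sv : R) (M : noise N -> set (R * R)).
Hypotheses (mu_ge0 : 0 <= mu) (q01 : 0 <= q <= 1).
Hypotheses (N_gt0 : (0 < N)%N) (lnN_lt : ln (N%:R : R) ^+ 2 < N%:R).
Hypothesis M_quadrant : forall k z, M k z -> 0 <= z.2.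

(* half-open, so it must strictly contain [0,1] x [0,(1-q) mu] *)
Definition down_rect : R * R * R * R := (0, 2, 0, mu + 1).

Lemma good_down_rect : good_rect down_rect.
Proof. by rewrite /good_rect /down_rect /= lexx ler0n addr_ge0. Qed.

Lemma moran_min_ge (x : 'I_N -> R) (X : R -> 'I_N -> R) (cs : 'I_N -> nat) :
  moran_path mu q sv M x X ->
  (forall i, count_in (M (NDown i)) (rect_of down_rect) = ((cs i)%:R)%:E) ->
  let V := 2 * Num.sqrt (\sum_(j < N) (x j - mean_cfg x) ^+ 2) + \sum_(i < N) (cs i)%:R in
  - V <= min_disp X /\ - V <= min_kc X.
Proof.
move=> hp hcs V; set m := mean_cfg x; set S := Num.sqrt _ in V *.
pose L i := (fset_set (M (NDown i) `&` rect_of down_rect) : seq (R * R)).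
have hfin i := count_in_finite (hcs i).
have L_down i t u : 0 < t <= 1 -> M (NDown i) (t, u) -> u <= (1 - q) * mu -> (t, u) \in L i.
  move=> /andP[t0 t1] hm hu; rewrite /L in_fset_set; last exact: (hfin i).1.
  apply: mem_set; split => //; have /= u0 := M_quadrant hm.
  have : 0 <= q * mu by rewrite mulr_ge0 //; case/andP: q01.
  by rewrite /rect_of /rect /=; split; apply/andP; split; nra.
have count_le t : (total_count_upto L t)%:R <= \sum_(i < N) (cs i)%:R :> R.
  rewrite -natr_sum ler_nat; apply: leq_sum => i _.
  by apply: leq_trans (count_size _ _) _; rewrite -(hfin i).2.
have xb i : m - S <= x i <= m + S.
  have := dist_le_sqrt_sum_sqr x m i; rewrite -/S ler_norml => /andP[? ?].
  by apply/andP; split; lra.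
have Xb t : 0 <= t <= 1 -> forall i, m - S - \sum_(i < N) (cs i)%:R <= X t i.
  move=> t01 i; have := moran_path_ge hp L_down (fun j => (andP (xb j)).1) t01 i.
  by have := count_le t; lra.
have [X0 _ _] := hp; split.
  by apply: min_disp_ge => // t t01 i; rewrite /V X0; have := Xb t t01 i; have := xb i; lra.
apply: min_kc_ge => t t01; rewrite /V X0.
have := kc_cfg_ge N_gt0 lnN_lt (Xb t t01).
have : kc_cfg x <= m + S by apply: kc_cfg_le => // i; case/andP: (xb i).
lra.
Qed.

End MoranDisplacement.

Lemma moran_min_ge_ae (R : realType) (d : measure_display) (Om : measurableType d)
    (P : probability Om R) (N : nat) (M : noise N -> Om -> set (R * R))
    (mu q sv : R) (x : 'I_N -> R) (X : Om -> R -> 'I_N -> R) :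
  indep_std_poisson P M -> 0 <= mu -> 0 <= q <= 1 ->
  (0 < N)%N -> ln (N%:R : R) ^+ 2 < N%:R ->
  {ae P, forall w, moran_path mu q sv (fun k => M k w) x (X w)} ->
  {ae P, forall w, exists cs : 'I_N -> nat,
     (forall i, count_in (M (NDown i) w) (rect_of (down_rect mu)) = ((cs i)%:R)%:E) /\
     let V := 2 * Num.sqrt (\sum_(j < N) (x j - mean_cfg x) ^+ 2)
              + \sum_(i < N) (cs i)%:R in
     - V <= min_disp (X w) /\ - V <= min_kc (X w)}.
Proof.
move=> hM mu0 q01 N0 hN hX.
have := counts_finite_ae hM (@NDown N) (good_down_rect mu0).
apply: filterS2 hX => w hp [cs hcs]; exists cs; split => //.
have [M0 _ _] := hM; by apply: moran_min_ge hp hcs => // k z /M0 [].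
Qed.

Lemma sqrt_c2_cfg_mulX3 (R : realType) N (x : 'I_N -> R) : (0 < N)%N ->
  Num.sqrt (c2_cfg x * N%:R ^+ 3) =
  Num.sqrt (\sum_(j < N) (x j - mean_cfg x) ^+ 2) * N%:R.
Proof.
move=> N0; rewrite (_ : c2_cfg x * _ = (\sum_(j < N) (x j - mean_cfg x) ^+ 2) * N%:R ^+ 2).
  by rewrite sqrtrM ?sqrtr_sqr ?ger0_norm // sumr_ge0 // => j _; exact: sqr_ge0.
by rewrite /c2_cfg; field; rewrite pnatr_eq0 -lt0n.
Qed.

Lemma lemma4p3_bound_le (R : rcfType) (S e n K : R) :
  0 <= S -> 0 <= e <= 1 -> 1 <= n -> 0 <= K ->
  - (2 + (1 + K) / 2) * (S * n + n ^+ 2) * Num.sqrt e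
  <= - (2 * S * e + n * (1 + K) / 2 * Num.sqrt e).
Proof.
move=> S0 /andP[e0 e1] n1 K0; set a := Num.sqrt e; set k := (1 + K) / 2.
have a0 : 0 <= a by exact: sqrtr_ge0.
have aa : e = a * a by rewrite -expr2 sqr_sqrtr.
have a1 : a <= 1 by nra.
have k0 : 0 <= k by rewrite divr_ge0 //; lra.
have -> : n * (1 + K) / 2 * a = k * (n * a) by rewrite /k; field.
have an : a <= n by lra.
have h1 : S * (a * a) <= S * (n * a) by rewrite ler_wpM2l // ler_wpM2r.
have h2 : k * (n * a) <= k * (n * n * a).
  by rewrite ler_wpM2l // ler_wpM2r // ler_peMr //; lra.
have h3 : 0 <= k * (S * (n * a)) by rewrite !mulr_ge0 //; lra.
rewrite aa; nra.
Qed.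

Lemma integral_min_ge (R : realType) (d : measure_display) (Om : measurableType d)
    (P : probability Om R) (N : nat) (M : noise N -> Om -> set (R * R))
    (mu : R) (x : 'I_N -> R) (B : set Om) (eps : R) (Phi : Om -> R) :
  indep_std_poisson P M -> 0 <= mu -> (0 < N)%N ->
  measurable B -> (P B <= eps%:E)%E -> eps <= 1 ->
  {ae P, forall w, exists cs : 'I_N -> nat,
     (forall i, count_in (M (NDown i) w) (rect_of (down_rect mu)) = ((cs i)%:R)%:E) /\
     - (2 * Num.sqrt (\sum_(j < N) (x j - mean_cfg x) ^+ 2) + \sum_(i < N) (cs i)%:R)
       <= Phi w} ->
  ((- (2 + (1 + expR (4 * area (down_rect mu))) / 2)
     * (Num.sqrt (c2_cfg x * N%:R ^+ 3) + N%:R ^+ 2) * Num.sqrt eps)%:E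
   <= \int[P]_w ((Phi w * \1_B w)%:E))%E.
Proof.
move=> hM mu0 N0 mB PB e1 hPhi.
have gr := good_down_rect mu0.
have hK := poisson_second_moment_le (area_ge0 gr).
have S0 : 0 <= 2 * Num.sqrt (\sum_(j < N) (x j - mean_cfg x) ^+ 2).
  by rewrite mulr_ge0 ?sqrtr_ge0.
apply: le_trans (integral_mul_indic_ge hM gr hK mB PB S0 hPhi); rewrite lee_fin.
have e0 : 0 <= eps by rewrite -lee_fin; apply: le_trans PB; exact: measure_ge0.
rewrite sqrt_c2_cfg_mulX3 //; apply: lemma4p3_bound_le.
- by rewrite sqrtr_ge0.
- by rewrite e0 e1.
- by rewrite ler1n.
- by rewrite expR_ge0.
Qed.

Unset Implicit Arguments. Set Strict Implicit.

Theorem lemma4p3 (R : realType) (mu : R) (mu_gt0 : 0 < mu) :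
  exists C : R,
  forall (q s : R), 0 <= q <= 1 -> 0 < s ->
  forall (d : measure_display) (Om : nat -> measurableType d)
         (P : forall N : nat, probability (Om N) R)
         (M : forall N : nat, noise N -> Om N -> set (R * R)),
    (forall N, indep_std_poisson (P N) (M N)) ->
  forall (X Y : forall N : nat, ('I_N -> R) -> Om N -> R -> 'I_N -> R),
    (forall N (x : 'I_N -> R), config_ok x ->
       {ae P N, forall w, moran_path mu q s (fun k => M N k w) x (X N x w)}) ->
    (forall N (x : 'I_N -> R), config_ok x ->
       {ae P N, forall w, moran_path mu q 0 (fun k => M N k w) x (Y N x w)}) ->
  forall (A : forall N : nat, set (R -> R))
         (B : forall N : nat, ('I_N -> R) -> set (Om N))
         (eps : nat -> R),
    eps n @[n --> \oo] --> 0 ->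
    (forall N (x : 'I_N -> R), config_ok x -> F1 (M N) (B N x)) ->
    (forall N (x : 'I_N -> R), config_ok x -> A N (emp x) ->
       (P N (B N x) <= (eps N)%:E)%E) ->
  exists N0 : nat, forall N : nat, (N0 <= N)%N ->
  forall x : 'I_N -> R, config_ok x -> A N (emp x) ->
    let bound :=
      - C * (Num.sqrt (c2_cfg x * N%:R ^+ 3) + N%:R ^+ 2) * Num.sqrt (eps N) in
    [/\ (bound%:E <= \int[P N]_w ((min_disp (X N x w) * \1_(B N x) w)%:E))%E,
        (bound%:E <= \int[P N]_w ((min_kc (X N x w) * \1_(B N x) w)%:E))%E,
        (bound%:E <= \int[P N]_w ((min_disp (Y N x w) * \1_(B N x) w)%:E))%E &
        (bound%:E <= \int[P N]_w ((min_kc (Y N x w) * \1_(B N x) w)%:E))%E].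
Proof.
exists (2 + (1 + expR (4 * area (down_rect mu))) / 2).
move=> q s q01 s0 d Om P M hM X Y hX hY A B eps heps hB hPB.
have [N1 _ hN1] : \forall n \near \oo, `|0 - eps n| < 1 by exact: cvgr_dist_lt heps _ ltr01.
exists (maxn N1 64) => N hN x cx hA bound.
have N64 : (64 <= N)%N := leq_trans (leq_maxr _ _) hN.
have N0 : (0 < N)%N := leq_trans (isT : (0 < 64)%N) N64.
have e1 : eps N <= 1.
  have := hN1 N (leq_trans (leq_maxl _ _) hN).
  by rewrite sub0r normrN ltr_norml => /andP[_ /ltW].
have bound_le := integral_min_ge (hM N) (ltW mu_gt0) N0
  (F1_measurable (hM N) (hB N x cx)) (hPB N x cx hA) e1.
have min_ge := moran_min_ge_ae (hM N) (ltW mu_gt0) q01 N0 (ln_sqr_lt_nat R N64).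
split; apply: bound_le.
- by apply: filterS (min_ge _ _ _ (hX N x cx)) => w [cs [? [? _]]]; exists cs.
- by apply: filterS (min_ge _ _ _ (hX N x cx)) => w [cs [? [_ ?]]]; exists cs.
- by apply: filterS (min_ge _ _ _ (hY N x cx)) => w [cs [? [? _]]]; exists cs.
- by apply: filterS (min_ge _ _ _ (hY N x cx)) => w [cs [? [_ ?]]]; exists cs.
Qed.
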